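(* Let $g(x)=\alpha x^{q^k}+\beta x$ with $\alpha\in\mathbb{F}_{q^n}^*$, $\beta\in\mathbb{F}_{q^n}$, $1\le k<n$. Let $f(y)=a_dy^{q^d}+a_\ell y^{q^\ell}$ with $0\le \ell<d<n$ and $a_d,a_\ell\in\mathbb{F}_{q^n}^*$, and let $0\le h<n$. Assume that either ($d=h$ and $a_d=\beta$) or ($\ell=h$ and $a_\ell=\beta$). Set $t=\ell$ if $h=d$, and $t=d$ if $h=\ell$. Then $L_f\cap L_g\ne\emptyset$ if and only if $\mathrm{N}_{q^n/q^e}(a_t/\alpha)=1$, where $e=\gcd(n,k,t-h)$.
   Context: Let $q$ be a prime power, $n\ge2$. For $e\mid n$, $\mathrm{N}_{q^n/q^e}(x)=x^{(q^n-1)/(q^e-1)}$. For $q$-polynomials $g,f$ over $\mathbb{F}_{q^n}$ and an integer $0\le h<n$: $L_g=\{\langle(x,g(x))\rangle_{\mathbb{F}_{q^n}}:x\in\mathbb{F}_{q^n}^*\}$ and $L_f=\{\langle(y^{q^h},f(y))\rangle_{\mathbb{F}_{q^n}}:y\in\mathbb{F}_{q^n}^*\}$. *)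

From HB Require Import structures.
From mathcomp Require Import all_boot all_order all_algebra all_field.
Set Implicit Arguments. Unset Strict Implicit. Unset Printing Implicit Defensive.
Import GRing.Theory.
Local Open Scope ring_scope.

Definition relnorm (F : finFieldType) (q n e : nat) (x : F) : F :=
  x ^+ ((q ^ n).-1 %/ (q ^ e).-1)%N.

(* Two nonzero vectors of F^2 span the same F-line (projective point). *)
Definition same_point (F : fieldType) (u v : F * F) : Prop :=
  exists lam : F, lam != 0 /\ u.1 = lam * v.1 /\ u.2 = lam * v.2.

Definition in_Lg (F : fieldType) (g : F -> F) (P : F * F) : Prop :=
  exists x : F, x != 0 /\ same_point P (x, g x).

Definition in_Lf (F : fieldType) (q h : nat) (f : F -> F) (P : F * F) : Prop :=
  exists y : F, y != 0 /\ same_point P (y ^+ (q ^ h), f y).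

Definition LfLg_meet (F : fieldType) (q h : nat) (f g : F -> F) : Prop :=
  exists P : F * F, in_Lf q h f P /\ in_Lg g P.

From HB Require Import structures.
From mathcomp Require Import all_boot all_order all_algebra all_field.
From mathcomp Require Import cyclic zify ring.
Import GRing.Theory.
Local Open Scope ring_scope.
Set Implicit Arguments. Unset Strict Implicit. Unset Printing Implicit Defensive.

(* A common point of L_f and L_g is a pair x, y <> 0 with f(y) x = g(x) y^(q^h).
   In both cases of the hypothesis f(y) = beta y^(q^h) + a_t y^(q^t) with t <> h,
   so the beta-terms cancel and the condition becomes
        a_t / alpha = x^(q^k - 1) * (y^(q^h) / y^(q^t)).
   As y ranges over F^*, the quotient y^(q^h) / y^(q^t) ranges exactly over the
   (q^s - 1)-th powers, s = |t - h|, because x |-> x^(q^j) is a bijection of F.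
   Hence L_f meets L_g iff a_t / alpha lies in the subgroup of F^* generated by
   the a-th and b-th powers, a = q^k - 1, b = q^s - 1.  In the cyclic group F^*
   of order N = q^n - 1 this subgroup is the group of c-th powers, c =
   gcd(N, a, b), i.e. the kernel of r |-> r^(N/c); finally
   gcd(q^n - 1, q^k - 1, q^s - 1) = q^gcd(n, k, s) - 1, so r^(N/c) is the norm. *)

(* gcd(q^a - 1, q^b - 1) = q^gcd(a, b) - 1, by Euclid's algorithm on exponents. *)
Lemma gcdn_expn_pred (q a b : nat) : (0 < q)%N ->
  gcdn (q ^ a).-1 (q ^ b).-1 = (q ^ gcdn a b).-1.
Proof.
move=> q_gt0; have [N] := ubnP (a + b); elim: N a b => [|N IH] a b //= ab_lt.
wlog le_ba : a b ab_lt / (b <= a)%N.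
  move=> W; case: (leqP b a) => [|/ltnW]; first exact: W.
  by rewrite gcdnC [gcdn a b]gcdnC; apply: W; rewrite // addnC.
have [->|b_gt0] := posnP b; first by rewrite expn0 /= !gcdn0.
have -> : (q ^ a).-1 = (q ^ (a - b) * (q ^ b).-1 + (q ^ (a - b)).-1)%N.
  rewrite -{1}(subnK le_ba) expnD.
  have := expn_gt0 q (a - b); have := expn_gt0 q b; rewrite q_gt0 /=.
  move: (q ^ (a - b))%N (q ^ b)%N => X Y; nia.
rewrite gcdnC gcdnMDl IH; last by lia.
by rewrite -[in RHS](subnK le_ba) [gcdn (_ + _) _]gcdnC gcdnDr.
Qed.

Definition prod_of_powers (F : fieldType) (a b : nat) (r : F) : Prop :=
  exists u w : F, [/\ u != 0, w != 0 & r = u ^+ a * w ^+ b].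

(* If s^N = 1 then s^gcd(N, a, b) is a product of an a-th and a b-th power
   (two Bezout relations, the exponents being read modulo N). *)
Lemma expr_gcd_prod (F : fieldType) (s : F) (N a b : nat) :
  s != 0 -> (0 < a)%N -> s ^+ N = 1 ->
  exists u w : F, s ^+ gcdn N (gcdn a b) = u ^+ a * w ^+ b.
Proof.
move=> s_neq0 a_gt0 sN.
have gab_gt0 : (0 < gcdn a b)%N by rewrite gcdn_gt0 a_gt0.
case: (egcdnP b a_gt0) => ka kb Eab _.
case: (egcdnP N gab_gt0) => kg kN EN _.
have s_gab : s ^+ gcdn a b = (s ^+ ka) ^+ a * ((s ^+ kb)^-1) ^+ b.
  apply: (mulIf (expf_neq0 (kb * b) s_neq0)).
  rewrite -exprD addnC -Eab exprM -mulrA exprM exprVn mulVf ?mulr1 //.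
  by rewrite !expf_neq0.
exists ((s ^+ ka) ^+ kg), (((s ^+ kb)^-1) ^+ kg).
have -> : s ^+ gcdn N (gcdn a b) = s ^+ (kg * gcdn a b).
  by rewrite gcdnC EN exprD mulnC exprM sN expr1n mul1r.
by rewrite mulnC exprM s_gab exprMn (exprAC _ a) (exprAC _ b).
Qed.

Section CyclicUnits.

Variables (F : finFieldType) (N : nat).
Hypothesis cardF : #|F| = N.+1.

Lemma expr_card_pred (x : F) : x != 0 -> x ^+ N = 1.
Proof.
by move=> x_neq0; apply: (mulfI x_neq0); rewrite mulr1 -exprS -cardF expf_card.
Qed.

(* F^* is cyclic of order N: for c | N, r^(N/c) = 1 forces r to be a c-th power. *)
Lemma expr_kernel_root (r : F) (c : nat) : r != 0 -> (0 < c)%N -> (c %| N)%N ->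
  r ^+ (N %/ c) = 1 -> exists s : F, r = s ^+ c.
Proof.
move=> r_neq0 c_gt0 c_dvd_N rNc.
have N_gt0 : (0 < N)%N by have := finNzRing_gt1 F; rewrite cardF.
have : has N.-primitive_root (enum (predC1 (0 : F))).
  apply: has_prim_root; rewrite ?enum_uniq ?N_gt0 // -?cardE ?cardC1 ?cardF //.
  apply/allP => x; rewrite mem_enum unity_rootE => /expr_card_pred ->.
  by rewrite eqxx.
case/hasP => gam _ gam_prim.
have [i r_def] := prim_rootP gam_prim (expr_card_pred r_neq0).
have c_dvd_i : (c %| i)%N.
  have : (N %| i * (N %/ c))%N.
    by rewrite (prim_order_dvd gam_prim) exprM -r_def rNc.
  rewrite -{1}(divnK c_dvd_N) [(i * _)%N]mulnC dvdn_pmul2l //.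
  by rewrite divn_gt0 // dvdn_leq.
by exists (gam ^+ (i %/ c)); rewrite r_def -exprM divnK.
Qed.

Lemma prod_of_powersE (a b : nat) (r : F) : (0 < a)%N -> (0 < b)%N -> r != 0 ->
  prod_of_powers a b r <-> r ^+ (N %/ gcdn N (gcdn a b)) = 1.
Proof.
move=> a_gt0 b_gt0 r_neq0; set c := gcdn N (gcdn a b).
have N_gt0 : (0 < N)%N by have := finNzRing_gt1 F; rewrite cardF.
have c_gt0 : (0 < c)%N by rewrite gcdn_gt0 N_gt0.
have c_dvd_N : (c %| N)%N by apply: dvdn_gcdl.
split=> [[u [w [u_neq0 w_neq0 ->]]] | rNc].
  have powc (x : F) j : x != 0 -> (c %| j)%N -> x ^+ j ^+ (N %/ c) = 1.
    move=> x_neq0 c_dvd_j; rewrite -exprM -(divnK c_dvd_j) -mulnA (mulnC c).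
    by rewrite divnK // exprM expr_card_pred // expf_neq0.
  have c_dvd_a : (c %| a)%N by rewrite (dvdn_trans (dvdn_gcdr _ _)) ?dvdn_gcdl.
  have c_dvd_b : (c %| b)%N by rewrite (dvdn_trans (dvdn_gcdr _ _)) ?dvdn_gcdr.
  by rewrite exprMn powc // powc // mulr1.
have [s r_def] := expr_kernel_root r_neq0 c_gt0 c_dvd_N rNc.
have s_neq0 : s != 0.
  by apply: contraNneq r_neq0; rewrite r_def => ->; rewrite expr0n gtn_eqF.
have [u [w r_prod]] := expr_gcd_prod b s_neq0 a_gt0 (expr_card_pred s_neq0).
rewrite -/c -r_def in r_prod; exists u, w; split=> //.
- by apply: contraNneq r_neq0; rewrite r_prod => ->; rewrite expr0n gtn_eqF ?mul0r.
- by apply: contraNneq r_neq0; rewrite r_prod => ->; rewrite expr0n gtn_eqF ?mulr0.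
Qed.

End CyclicUnits.

Lemma expr_pred_div (F : fieldType) (v : F) (m : nat) : v != 0 -> (0 < m)%N ->
  v ^+ m.-1 = v ^+ m / v.
Proof. by move=> v_neq0 m_gt0; rewrite -{2}(prednK m_gt0) exprSr mulfK. Qed.

Section FrobeniusPowers.

Variables (F : finFieldType) (q n : nat).
Hypotheses (cardF : #|F| = (q ^ n)%N) (n_gt0 : (0 < n)%N).

Lemma q_gt0 : (0 < q)%N.
Proof. by have := finNzRing_gt1 F; rewrite cardF; case: (q) => //; rewrite exp0n. Qed.

(* The map y |-> y^(q^j) is onto: composed with y |-> y^(q^(j(n-1))) it is
   y |-> y^(#|F|^j), the identity of F. *)
Lemma frobenius_surj (j : nat) (w : F) : exists y : F, y ^+ (q ^ j) = w.
Proof.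
exists (w ^+ (q ^ (j * n.-1))); rewrite -exprM -expnD.
rewrite -[in X in (_ + X)%N](muln1 j) -mulnDr addn1 prednK // mulnC expnM -cardF.
by elim: j => [|j IH]; rewrite ?expr1 // expnS exprM expf_card.
Qed.

Lemma frobenius_quotients (h t : nat) (z : F) :
  (exists2 y, y != 0 & z = y ^+ (q ^ h) / y ^+ (q ^ t)) <->
  (exists2 w, w != 0 & z = w ^+ (q ^ `|t%:Z - h%:Z|).-1).
Proof.
wlog le_th : h t z / (t <= h)%N.
  move=> W; case: (leqP t h) => [|/ltnW le_ht]; first exact: W.
  rewrite distnC; have [W1 W2] := W t h z^-1 le_ht.
  split=> [[y y_neq0 z_def] | [w w_neq0 z_def]].
    have [|w w_neq0 E] := W1; first by exists y; rewrite // z_def invf_div.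
    by exists w^-1; rewrite ?invr_eq0 // exprVn -E invrK.
  have [|y y_neq0 E] := W2; first by exists w^-1; rewrite ?invr_eq0 // z_def exprVn.
  by exists y; rewrite // -invf_div -E invrK.
rewrite distnEr //.
have frob_sub (y : F) : y ^+ (q ^ t) ^+ (q ^ (h - t)) = y ^+ (q ^ h).
  by rewrite -exprM -expnD subnKC.
have qs_gt0 : (0 < q ^ (h - t))%N by rewrite expn_gt0 q_gt0.
split=> [[y y_neq0 ->] | [w w_neq0 ->]].
  exists (y ^+ (q ^ t)); first by rewrite expf_neq0.
  by rewrite expr_pred_div ?expf_neq0 // frob_sub.
have [y y_def] := frobenius_surj t w.
have y_neq0 : y != 0.
  apply: contraNneq w_neq0; rewrite -y_def => ->.
  by rewrite expr0n gtn_eqF // expn_gt0 q_gt0.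
by exists y; rewrite // expr_pred_div // -y_def frob_sub.
Qed.

End FrobeniusPowers.

(* A common point of L_f and L_g is a solution x, y <> 0 of f(y) x = g(x) y^(q^h):
   the two spanning vectors are proportional iff their 2x2 determinant vanishes. *)
Lemma meet_iff_equation (F : fieldType) (q h : nat) (f g : F -> F) :
  LfLg_meet q h f g <->
  exists x y : F, [/\ x != 0, y != 0 & f y * x = g x * y ^+ (q ^ h)].
Proof.
split=> [[P [[y [y_neq0 [lam [lam_neq0 [P1 P2]]]]]
                [x [x_neq0 [mu [_ [Q1 Q2]]]]]]] |].
  move: P1 P2 => /= P1 P2; exists x, y; split=> //; apply: (mulfI lam_neq0).
  have -> : lam * (g x * y ^+ (q ^ h)) = g x * (lam * y ^+ (q ^ h)) by ring.
  by rewrite [LHS]mulrA -P2 -P1 Q1 Q2 /=; ring.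
case=> x [y [x_neq0 y_neq0 E]].
exists (y ^+ (q ^ h), f y); split.
  by exists y; split=> //; exists 1; rewrite oner_neq0 !mul1r.
exists x; split=> //; exists (y ^+ (q ^ h) / x).
rewrite mulf_neq0 ?invr_eq0 ?expf_neq0 //= divfK //; split=> //; split=> //.
by rewrite -[f y](mulfK x_neq0) E; ring.
Qed.

Lemma cancel_common_term (R : comPzRingType) (beta Y v x z : R) :
  (beta * Y + v) * x = (z + beta * x) * Y <-> v * x = z * Y.
Proof.
have -> : (z + beta * x) * Y = beta * Y * x + z * Y by ring.
by rewrite mulrDl; split=> [/addrI | ->].
Qed.

Lemma equation_as_ratio (F : fieldType) (alpha c x T Y : F) (m : nat) :
  alpha != 0 -> x != 0 -> T != 0 -> (0 < m)%N ->
  c * T * x = alpha * x ^+ m * Y <-> c / alpha = x ^+ m.-1 * (Y / T).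
Proof.
move=> alpha_neq0 x_neq0 T_neq0 m_gt0; rewrite expr_pred_div //.
have Tx_neq0 : T * x != 0 by rewrite mulf_neq0.
have -> : alpha * x ^+ m * Y = alpha * (x ^+ m / x * (Y / T)) * (T * x).
  by field; rewrite T_neq0 x_neq0.
rewrite -[c * T * x]mulrA.
split=> [/(mulIf Tx_neq0) -> | <-]; last by rewrite [alpha * _]mulrC divfK.
by rewrite mulrC mulKf.
Qed.

Lemma meet_iff_prod_of_powers (F : finFieldType) (q n k h t : nat)
    (alpha beta c : F) (f : F -> F) :
  #|F| = (q ^ n)%N -> (0 < n)%N -> alpha != 0 ->
  (forall y, f y = beta * y ^+ (q ^ h) + c * y ^+ (q ^ t)) ->
  LfLg_meet q h f (fun x => alpha * x ^+ (q ^ k) + beta * x) <->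
  prod_of_powers (q ^ k).-1 (q ^ `|t%:Z - h%:Z|).-1 (c / alpha).
Proof.
move=> cardF n_gt0 alpha_neq0 f_def; rewrite meet_iff_equation.
have q_pos := q_gt0 cardF n_gt0.
have equationE (x y : F) : x != 0 -> y != 0 ->
    f y * x = (alpha * x ^+ (q ^ k) + beta * x) * y ^+ (q ^ h) <->
    c / alpha = x ^+ (q ^ k).-1 * (y ^+ (q ^ h) / y ^+ (q ^ t)).
  move=> x_neq0 y_neq0; rewrite f_def cancel_common_term.
  by rewrite equation_as_ratio ?expf_neq0 ?expn_gt0 ?q_pos.
have quotients := frobenius_quotients cardF n_gt0 h t.
split=> [[x [y [x_neq0 y_neq0 /(equationE _ _ x_neq0 y_neq0) E]]] |
          [u [w [u_neq0 w_neq0 E]]]].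
  have [|w w_neq0 Ew] := (quotients (y ^+ (q ^ h) / y ^+ (q ^ t))).1.
    by exists y.
  by exists x, w; rewrite -Ew.
have [|y y_neq0 Ey] := (quotients (w ^+ (q ^ `|t%:Z - h%:Z|).-1)).2; first by exists w.
by exists u, y; split=> //; apply/(equationE _ _ u_neq0 y_neq0); rewrite -Ey.
Qed.

Theorem proposition3p10 (F : finFieldType) (p m q n : nat)
  (hp : prime p) (hm : (0 < m)%N) (hq : q = (p ^ m)%N) (hn : (2 <= n)%N)
  (hF : #|F| = (q ^ n)%N)
  (alpha beta ad al : F) (k d l h : nat)
  (halpha : alpha != 0) (hk1 : (1 <= k)%N) (hkn : (k < n)%N)
  (hld : (l < d)%N) (hdn : (d < n)%N) (had : ad != 0) (hal : al != 0)
  (hh : (h < n)%N)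
  (hcase : (d = h /\ ad = beta) \/ (l = h /\ al = beta)) :
  let g := fun x : F => alpha * x ^+ (q ^ k) + beta * x in
  let f := fun y : F => ad * y ^+ (q ^ d) + al * y ^+ (q ^ l) in
  let t := if h == d then l else d in
  let at_ := if h == d then al else ad in
  let e := gcdn n (gcdn k `|t%:Z - h%:Z|%N) in
  LfLg_meet q h f g <-> relnorm q n e (at_ / alpha) = 1.
Proof.
move=> g f t at_ e.
have q_gt1 : (1 < q)%N by rewrite hq -(exp1n m) ltn_exp2r // prime_gt1.
have pred_expn_gt0 j : (0 < j)%N -> (0 < (q ^ j).-1)%N.
  by move=> j_gt0; rewrite -subn1 subn_gt0 -{1}(expn0 q) ltn_exp2l.
have [t_neq_h at_neq0 f_def] :
    [/\ t != h, at_ != 0 & forall y, f y = beta * y ^+ (q ^ h) + at_ * y ^+ (q ^ t)].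
  rewrite /t /at_ /f; case: hcase => [[<- <-] | [<- <-]].
    by rewrite eqxx (ltn_eqF hld) hal.
  by rewrite (ltn_eqF hld) (gtn_eqF hld) had; split=> // y; rewrite addrC.
have cardF : #|F| = (q ^ n).-1.+1 by rewrite hF prednK // expn_gt0 ltnW.
rewrite (meet_iff_prod_of_powers k hF (ltnW hn) halpha f_def).
have dist_gt0 : (0 < `|t%:Z - h%:Z|)%N by rewrite lt0n distn_eq0.
have ratio_neq0 : at_ / alpha != 0 by rewrite mulf_neq0 ?invr_eq0.
rewrite (prod_of_powersE cardF (pred_expn_gt0 _ hk1) (pred_expn_gt0 _ dist_gt0)
                         ratio_neq0).
have q_gt0 := ltnW q_gt1.
by rewrite /relnorm /e !gcdn_expn_pred.
Qed.
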